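(* For any weight $\omega\in\mathbb{R}^J$ with $\mathscr{T}_\omega=\mathscr{T}_{\max}$, the leading term ideal of $I_\mathcal{A}$ with respect to $\omega$ equals the Stanley–Reisner ideal of $\Sigma$, i.e. the ideal of $\mathbb{C}[y_{i,j}:(i,j)\in J]$ generated by the monomials $\prod_{(i,j)\in\mathcal{P}}y_{i,j}$ for $\mathcal{P}$ a primitive collection of $\Sigma$.
   Context: $N\cong\mathbb{Z}^n$, $M$ dual. $X$ smooth projective toric with fan $\Sigma$ and nef-partition $\Sigma(1)=I_1\sqcup\cdots\sqcup I_r$ (each $E_i=\sum_{\rho\in I_i}D_\rho$ nef), $I_i=\{\rho_{i,1},\dots,\rho_{i,n_i}\}$, $J=\{(i,j):1\le i\le r,0\le j\le n_i\}$, $\nu_{i,j}=(\rho_{i,j},e_i)$ ($j\ge1$), $\nu_{i,0}=(0,e_i)$ in $N\times\mathbb{Z}^r$, $\mathcal{A}=\{\nu_{i,j}\}$, $L_{\mathrm{ext}}=\ker(\mathbb{Z}^J\to N\times\mathbb{Z}^r,\ e_{i,j}\mapsto\nu_{i,j})$. Toric ideal $I_\mathcal{A}=\langle y^{\ell^+}-y^{\ell^-}:\ell\in L_{\mathrm{ext}}\rangle$, $\ell=\ell^+-\ell^-$ with $\ell^\pm\ge0$ of disjoint support; $\omega\in\mathbb{R}^J$ defines leading terms by maximal weight $\sum\omega_{i,j}m_{i,j}$ of $y^m$. $\mathscr{T}_\omega$ is the regular subdivision of $\mathcal{A}$ induced by $\omega$ (projection of lower faces of $\mathrm{Cone}\{(\nu,\omega_\nu)\}$);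 $\mathscr{T}_{\max}$ is the triangulation with maximal simplices $\{\nu_{1,0},\dots,\nu_{r,0}\}\cup\{\nu_{i,j}:\rho_{i,j}\in\sigma(1)\}$, $\sigma$ maximal in $\Sigma$. A primitive collection is $\mathcal{P}\subset\Sigma(1)$ not spanning a cone of $\Sigma$ while every proper subset does. *)

From HB Require Import structures.
From mathcomp Require Import all_boot all_order all_algebra.
From mathcomp Require Import reals complex mpoly.
Set Implicit Arguments. Unset Strict Implicit. Unset Printing Implicit Defensive.
Import Order.TTheory GRing.Theory Num.Theory.
Local Open Scope ring_scope.

Section ToricSetup.

Variable R : realType.
Variable n : nat.
(* Sigma(1): a finite type of rays, with primitive generators v rho in N = Z^n *)
Variable Rays : finType.
Variable v : Rays -> 'rV[int]_n.

Definition rcone (S : {set Rays}) (x : 'rV[R]_n) : Prop :=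
  exists a : Rays -> R,
    [/\ (forall rho, 0 <= a rho),
        (forall rho, rho \notin S -> a rho = 0)
      & x = \sum_(rho : Rays) a rho *: map_mx (fun z : int => z%:~R) (v rho)].

(* a fan is encoded by the ray sets sigma(1) of its cones *)
Definition maximal_cone (Sigma : {set {set Rays}}) (sigma : {set Rays}) : Prop :=
  sigma \in Sigma /\ forall tau : {set Rays}, tau \in Sigma -> sigma \subset tau -> tau = sigma.

Definition dualpair (m u : 'rV[int]_n) : int := \sum_(k < n) m 0 k * u 0 k.

Definition smooth_complete_fan (Sigma : {set {set Rays}}) : Prop :=
  [/\ injective v /\ (forall rho, [set rho] \in Sigma),
      (forall sigma tau : {set Rays}, sigma \in Sigma -> tau \subset sigma -> tau \in Sigma),
      (* smoothness: the generators of each cone are part of a Z-basis of N *)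
      (forall sigma : {set Rays}, sigma \in Sigma ->
        exists M : 'M[int]_n, M \in unitmx /\
          forall rho, rho \in sigma -> exists k : 'I_n, row k M = v rho),
      (* fan condition: cones meet along common faces *)
      (forall sigma tau : {set Rays}, sigma \in Sigma -> tau \in Sigma ->
        forall x, (rcone sigma x /\ rcone tau x) <-> rcone (sigma :&: tau) x)
    &
      forall x : 'rV[R]_n, exists2 sigma : {set Rays}, sigma \in Sigma & rcone sigma x].

(* the T-divisor sum_rho a_rho D_rho is ample (strictly convex support function) *)
Definition ample_divisor (Sigma : {set {set Rays}}) (a : Rays -> int) : Prop :=
  forall sigma : {set Rays}, maximal_cone Sigma sigma ->
    exists m : 'rV[int]_n, forall rho,
      (rho \in sigma -> dualpair m (v rho) = - a rho) /\
      (rho \notin sigma -> - a rho < dualpair m (v rho)).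

(* the T-divisor sum_rho a_rho D_rho is nef (convex support function) *)
Definition nef_divisor (Sigma : {set {set Rays}}) (a : Rays -> int) : Prop :=
  forall sigma : {set Rays}, maximal_cone Sigma sigma ->
    exists m : 'rV[int]_n, forall rho,
      (rho \in sigma -> dualpair m (v rho) = - a rho) /\
      (rho \notin sigma -> - a rho <= dualpair m (v rho)).

Definition smooth_projective_fan (Sigma : {set {set Rays}}) : Prop :=
  smooth_complete_fan Sigma /\ exists a, ample_divisor Sigma a.

Variable r : nat.
(* part rho = i  iff  rho \in I_i *)
Variable part : Rays -> 'I_r.

Definition nef_partition (Sigma : {set {set Rays}}) : Prop :=
  forall i : 'I_r, nef_divisor Sigma (fun rho => ((part rho == i) : nat)%:Z).

(* J = {(i,0)} u {(i,j) : j >= 1}, re-indexed as 'I_r + Sigma(1):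
   inl i <-> (i,0),  inr rho_{i,j} <-> (i,j) *)
Definition Jidx : finType := ('I_r + Rays)%type.

(* coordinates of N x Z^r *)
Definition Coord : finType := ('I_n + 'I_r)%type.

Definition nu (j : Jidx) (c : Coord) : int :=
  match j, c with
  | inl i, inl _ => 0
  | inl i, inr i' => ((i == i') : nat)%:Z
  | inr rho, inl k => v rho 0 k
  | inr rho, inr i' => ((part rho == i') : nat)%:Z
  end.

Definition in_Lext (l : Jidx -> int) : Prop :=
  forall c : Coord, \sum_(j : Jidx) l j * nu j c = 0.

Definition C := R[i].
Definition JPoly := {mpoly C[#|Jidx|]}.

Definition yvar (j : Jidx) : JPoly := 'X_(enum_rank j).

Definition ymon (m : Jidx -> nat) : JPoly := \prod_(j : Jidx) yvar j ^+ m j.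

Definition pospart (z : int) : nat := `|Num.max z 0|%N.
Definition negpart (z : int) : nat := `|Num.max (- z) 0|%N.

Definition ideal_gen (S : JPoly -> Prop) (p : JPoly) : Prop :=
  exists s : seq (JPoly * JPoly),
    (forall x, x \in s -> S x.2) /\ p = \sum_(x <- s) x.1 * x.2.

Definition toric_gen (p : JPoly) : Prop :=
  exists l, in_Lext l /\ p = ymon (fun j => pospart (l j)) - ymon (fun j => negpart (l j)).

Definition toric_ideal : JPoly -> Prop := ideal_gen toric_gen.

Variable omega : Jidx -> R.

Definition mweight (m : 'X_{1..#|Jidx|}) : R :=
  \sum_(j : Jidx) omega j * (m (enum_rank j))%:R.

Definition init_form (p : JPoly) : JPoly :=
  \sum_(m <- msupp p | all (fun m' => mweight m' <= mweight m) (msupp p))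
     p@_m *: 'X_[m].

Definition lead_ideal : JPoly -> Prop :=
  ideal_gen (fun q => exists f, toric_ideal f /\ q = init_form f).

(* cells of the regular subdivision T_omega: label sets of the lower faces of
   Cone{(nu_j, omega_j)} *)
Definition regsub_cell (S : {set Jidx}) : Prop :=
  exists c : Coord -> R, forall j : Jidx,
    (\sum_(k : Coord) c k * (nu j k)%:~R <= omega j) /\
    (j \in S <-> \sum_(k : Coord) c k * (nu j k)%:~R = omega j).

Definition Tmax_cell (Sigma : {set {set Rays}}) (S : {set Jidx}) : Prop :=
  exists sigma : {set Rays}, maximal_cone Sigma sigma /\
    S \subset [set j : Jidx | match j with inl _ => true | inr rho => rho \in sigma end].

Definition primitive_collection (Sigma : {set {set Rays}}) (P : {set Rays}) : Prop :=
  P \notin Sigma /\ forall Q : {set Rays}, Q \proper P -> Q \in Sigma.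

Definition SR_gen (Sigma : {set {set Rays}}) (p : JPoly) : Prop :=
  exists P : {set Rays}, primitive_collection Sigma P /\ p = \prod_(rho in P) yvar (inr rho).

Definition SR_ideal (Sigma : {set {set Rays}}) : JPoly -> Prop :=
  ideal_gen (SR_gen Sigma).

End ToricSetup.

From Pilot Require Import Defs.
From HB Require Import structures.
From mathcomp Require Import all_boot all_order all_algebra.
From mathcomp Require Import reals complex mpoly zify.
Set Implicit Arguments. Unset Strict Implicit. Unset Printing Implicit Defensive.
Import Order.TTheory GRing.Theory Num.Theory.
Local Open Scope ring_scope.

(* (in_omega(I_A) <= SR) Let f be in I_A and y^m a monomial of in_omega(f).  If
   the rays in supp(m) formed a cone of Sigma, supp(m) would lie in a cell of
   T_max = T_omega, cut out by a lower-face functional c.  Using c and the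
   smoothness of the cone (the columns of A on a cell are linearly independent)
   y^m is the only monomial of f of its A-degree with weight >= omega(m).  But
   the coefficients of any element of I_A sum to zero over each A-degree
   class, so the coefficient of y^m in f would vanish.  Hence supp(m) contains
   a primitive collection and y^m is a multiple of a generator of SR.

   (SR <= in_omega(I_A)) For a primitive collection P, completeness and
   smoothness write sum_{rho in P} v_rho = sum_{rho in sigma} b_rho v_rho with
   b_rho in N and sigma maximal; the nef partition bounds sum_{rho in I_i} b_rho
   by #|P :&: I_i|, so padding with the variables y_{i,0} yields a binomial
   y^P - y^w in I_A.  Since P is not in sigma, the lower-face functional of the
   cell of sigma gives omega(w) < omega(P), so in_omega(y^P - y^w) = y^P. *)

Section IdealGen.
Variables (R : realType) (Rays : finType) (r : nat).
Local Notation P := (JPoly R Rays r).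
Implicit Types (S : P -> Prop) (p q : P).

Lemma ideal_gen_base S p : S p -> ideal_gen S p.
Proof.
move=> Sp; exists [:: (1, p)]; split; last by rewrite big_seq1 mul1r.
by move=> x; rewrite inE => /eqP ->.
Qed.

Lemma ideal_gen0 S : ideal_gen S 0.
Proof. by exists [::]; split=> //; rewrite big_nil. Qed.

Lemma ideal_genD S p q : ideal_gen S p -> ideal_gen S q -> ideal_gen S (p + q).
Proof.
move=> [s [Hs ->]] [t [Ht ->]]; exists (s ++ t); split; last by rewrite big_cat.
by move=> x; rewrite mem_cat => /orP [/Hs|/Ht].
Qed.

Lemma ideal_genMl S p q : ideal_gen S p -> ideal_gen S (q * p).
Proof.
move=> [s [Hs ->]]; exists [seq (q * x.1, x.2) | x <- s]; split.
  by move=> x /mapP [y ys ->] /=; apply: Hs.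
by rewrite big_map mulr_sumr; apply: eq_bigr => x _; rewrite mulrA.
Qed.

Lemma ideal_gen_sum S (T : eqType) (s : seq T) (F : T -> P) :
  (forall x, x \in s -> ideal_gen S (F x)) -> ideal_gen S (\sum_(x <- s) F x).
Proof.
elim: s => [|a s IH] H; first by rewrite big_nil; apply: ideal_gen0.
rewrite big_cons; apply: ideal_genD; first by apply: H; rewrite inE eqxx.
by apply: IH => x xs; apply: H; rewrite inE xs orbT.
Qed.

Lemma ideal_gen_trans S1 S2 p :
  (forall q, S1 q -> ideal_gen S2 q) -> ideal_gen S1 p -> ideal_gen S2 p.
Proof.
move=> H [s [Hs ->]]; apply: ideal_gen_sum => x xs; apply: ideal_genMl.
exact: H (Hs _ xs).
Qed.
End IdealGen.

Section Monomials.
Variables (R : realType) (Rays : finType) (r : nat).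
Local Notation J := (Jidx Rays r).
Local Notation N := #|J|.
Local Notation P := (JPoly R Rays r).

Definition mnm_of (f : J -> nat) : 'X_{1..N} := [multinom f (enum_val i) | i < N].
Definition expo (m : 'X_{1..N}) (j : J) : nat := m (enum_rank j).

Lemma mnm_ofE f j : mnm_of f (enum_rank j) = f j.
Proof. by rewrite mnmE enum_rankK. Qed.

Lemma mnm_of_expo m : mnm_of (expo m) = m.
Proof. by apply/mnmP => i; rewrite mnmE /expo enum_valK. Qed.

Lemma expo_mnm_of f : expo (mnm_of f) =1 f.
Proof. by move=> j; rewrite /expo mnm_ofE. Qed.

Lemma expo_inj (m1 m2 : 'X_{1..N}) : expo m1 =1 expo m2 -> m1 = m2.
Proof. by move=> H; rewrite -(mnm_of_expo m1) -(mnm_of_expo m2); apply/mnmP => i; rewrite !mnmE H. Qed.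

Lemma ymonE f : ymon R f = 'X_[mnm_of f] :> P.
Proof.
rewrite mpolyXE_id /ymon (reindex (@enum_rank J)) /=; last first.
  by exists enum_val => x _; [exact: enum_rankK | exact: enum_valK].
by apply: eq_bigr => j _; rewrite mnm_ofE.
Qed.

Definition ray_indicator (Pc : {set Rays}) (j : J) : nat :=
  match j with inl _ => 0%N | inr rho => (rho \in Pc) : nat end.

Lemma prod_yvarE (Pc : {set Rays}) :
  \prod_(rho in Pc) yvar R (inr rho : J) = 'X_[mnm_of (ray_indicator Pc)].
Proof.
apply/esym; rewrite -ymonE /ymon (@big_sumType _ 1 *%R 'I_r Rays xpredT) /=.
rewrite big1 ?mul1r; last by move=> i _; rewrite expr0.
rewrite [RHS]big_mkcond /=; apply: eq_bigr => rho _.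
by case: (rho \in Pc); rewrite ?expr1 ?expr0.
Qed.
End Monomials.
Arguments ray_indicator {Rays r} Pc j.

Section CoefSum.
Variables (K : comNzRingType) (N : nat).
Local Notation P := {mpoly K[N]}.
Implicit Types (p q : P) (Q : pred 'X_{1..N}).

Definition coef_sum Q p := \sum_(m <- msupp p | Q m) p@_m.

(* coef_sum may be computed over any duplicate-free superset of the support;
   hence it is linear. *)
Lemma coef_sum_ext Q p s : uniq s -> {subset msupp p <= s} ->
  coef_sum Q p = \sum_(m <- s | Q m) p@_m.
Proof.
move=> us sub; rewrite (bigID (fun m => m \in msupp p)) /=.
rewrite [X in _ = _ + X]big1 ?addr0; last first.
  by move=> m /andP [_ /memN_msupp_eq0].
rewrite (eq_bigl (fun m => (m \in msupp p) && Q m)); last by move=> m; rewrite andbC.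
rewrite -big_filter_cond /coef_sum; apply: perm_big.
apply: uniq_perm; [exact: msupp_uniq | exact: filter_uniq |].
by move=> m; rewrite mem_filter; case: (boolP (m \in msupp p)) => // /sub ->.
Qed.

Lemma coef_sum_lin Q a p q : coef_sum Q (a *: p + q) = a * coef_sum Q p + coef_sum Q q.
Proof.
set s := undup (msupp p ++ msupp q ++ msupp (a *: p + q)).
have us : uniq s by exact: undup_uniq.
rewrite (@coef_sum_ext _ _ s) // ?(@coef_sum_ext _ p s) // ?(@coef_sum_ext _ q s) //;
  try by move=> m mm; rewrite mem_undup !mem_cat mm ?orbT.
rewrite mulr_sumr -big_split /=; apply: eq_bigr => m _.
by rewrite mcoeffD mcoeffZ.
Qed.

Lemma coef_sum0 Q : coef_sum Q 0 = 0.
Proof. by rewrite /coef_sum msupp0 big_nil. Qed.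

Lemma coef_sumZ Q a p : coef_sum Q (a *: p) = a * coef_sum Q p.
Proof. by rewrite -[a *: p]addr0 coef_sum_lin coef_sum0 addr0. Qed.

Lemma coef_sumD Q p q : coef_sum Q (p + q) = coef_sum Q p + coef_sum Q q.
Proof. by rewrite -[p]scale1r coef_sum_lin scale1r mul1r. Qed.

Lemma coef_sum_big Q (T : Type) (s : seq T) (F : T -> P) :
  coef_sum Q (\sum_(x <- s) F x) = \sum_(x <- s) coef_sum Q (F x).
Proof.
elim: s => [|x s IH]; first by rewrite !big_nil coef_sum0.
by rewrite !big_cons coef_sumD IH.
Qed.

Lemma coef_sumX Q m : coef_sum Q ('X_[m] : P) = (Q m)%:R.
Proof.
rewrite (@coef_sum_ext _ _ [:: m]) // ?msuppX // big_mkcond big_seq1 mcoeffX eqxx.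
by case: (Q m).
Qed.

Lemma coef_sum_binomial Q p a b : (forall m, Q (m + a)%MM = Q (m + b)%MM) ->
  coef_sum Q (p * ('X_[a] - 'X_[b])) = 0.
Proof.
move=> HQ; rewrite {1}(mpolyE p) mulr_suml coef_sum_big big1 // => m _.
rewrite -scalerAl mulrBr -!mpolyXD coef_sumZ -[X in _ - X]scale1r -scaleNr.
by rewrite addrC coef_sum_lin !coef_sumX HQ mulN1r addNr mulr0.
Qed.

Lemma coef_sum_single Q p m : m \in msupp p -> Q m ->
  (forall m', m' \in msupp p -> Q m' -> m' = m) -> coef_sum Q p = p@_m.
Proof.
move=> mp Qm uq; rewrite /coef_sum big_mkcond /= (bigD1_seq m) ?msupp_uniq //=.
rewrite Qm big1_seq ?addr0 // => m' /andP [ne m'p].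
by case: ifP => // /(uq _ m'p) e; move: ne; rewrite e eqxx.
Qed.
End CoefSum.

Lemma pos_negpart (z : int) : (pospart z)%:Z - (negpart z)%:Z = z.
Proof. rewrite /pospart /negpart; lia. Qed.

Lemma pos_negpart_min (a b : nat) :
  (pospart (a%:Z - b%:Z) + minn a b = a)%N /\ (negpart (a%:Z - b%:Z) + minn a b = b)%N.
Proof. rewrite /pospart /negpart; lia. Qed.

Lemma PoszSum (T : Type) (s : seq T) (Pr : pred T) (F : T -> nat) :
  Posz (\sum_(i <- s | Pr i) F i)%N = \sum_(i <- s | Pr i) (F i)%:Z.
Proof. exact: (big_morph Posz PoszD). Qed.

Lemma sumJ (Rays : finType) (r : nat) (K : nmodType) (F : Jidx Rays r -> K) :
  \sum_(j : Jidx Rays r) F j = \sum_(i : 'I_r) F (inl i) + \sum_(rho : Rays) F (inr rho).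
Proof. exact: (@big_sumType K 0 +%R 'I_r Rays xpredT F). Qed.

Section ADegree.
Variables (R : realType) (n : nat) (Rays : finType) (v : Rays -> 'rV[int]_n)
  (r : nat) (part : Rays -> 'I_r).
Local Notation J := (Jidx Rays r).
Local Notation N := #|J|.
Local Notation P := (JPoly R Rays r).

Definition Adeg (f : J -> nat) (c : Coord n r) : int := \sum_(j : J) (f j)%:Z * nu v part j c.

Definition Adeg_class (d : Coord n r -> int) : pred 'X_{1..N} :=
  fun m => [forall c, Adeg (expo m) c == d c].

Lemma Adeg_mnmD (m1 m2 : 'X_{1..N}) c :
  Adeg (expo (m1 + m2)%MM) c = Adeg (expo m1) c + Adeg (expo m2) c.
Proof.
rewrite /Adeg -big_split /=; apply: eq_bigr => j _.
by rewrite /expo mnmDE PoszD mulrDl.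
Qed.

Lemma Adeg_ext (f g : J -> nat) c : f =1 g -> Adeg f c = Adeg g c.
Proof. by move=> fg; apply: eq_bigr => j _; rewrite fg. Qed.

Lemma Adeg_eqE (f g : J -> nat) :
  (forall c, Adeg f c = Adeg g c) <-> in_Lext v part (fun j => (f j)%:Z - (g j)%:Z).
Proof.
have E c : \sum_(j : J) ((f j)%:Z - (g j)%:Z) * nu v part j c = Adeg f c - Adeg g c.
  by rewrite /Adeg -sumrB; apply: eq_bigr => j _; rewrite mulrBl.
split=> H c; first by rewrite E H subrr.
by apply/eqP; rewrite -subr_eq0 -E H.
Qed.

Lemma toric_coef_sum0 d (p : P) : toric_ideal v part p -> coef_sum (Adeg_class d) p = 0.
Proof.
move=> [s [Hs ->]]; rewrite coef_sum_big big1_seq // => x xs.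
have [l [Hl ->]] := Hs x xs; rewrite !ymonE; apply: coef_sum_binomial => m.
rewrite /Adeg_class; apply: eq_forallb => c; rewrite !Adeg_mnmD.
rewrite !(Adeg_ext _ (expo_mnm_of _)).
suff /Adeg_eqE -> : in_Lext v part (fun j => (pospart (l j))%:Z - (negpart (l j))%:Z) by [].
by move=> c'; rewrite -[RHS](Hl c'); apply: eq_bigr => j _; rewrite pos_negpart.
Qed.

Lemma toric_binomial (f g : J -> nat) : (forall c, Adeg f c = Adeg g c) ->
  toric_ideal v part ('X_[mnm_of f] - 'X_[mnm_of g] : P).
Proof.
move=> /Adeg_eqE Hl; set l := fun j => _ in Hl.
pose h (j : J) : nat := minn (f j) (g j).
have -> : 'X_[mnm_of f] - 'X_[mnm_of g] = 'X_[mnm_of h] *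
    (ymon R (fun j => pospart (l j)) - ymon R (fun j => negpart (l j))) :> P.
  rewrite !ymonE mulrBr -!mpolyXD.
  congr (_ - _); congr 'X_[_]; apply/mnmP => i; rewrite mnmDE !mnmE /l addnC;
    by have [H1 H2] := pos_negpart_min (f (enum_val i)) (g (enum_val i)); rewrite ?H1 ?H2.
by apply: ideal_genMl; apply: ideal_gen_base; exists l.
Qed.
End ADegree.

Lemma sum_seq_delta (K : nzRingType) (T : eqType) (s : seq T) (F : T -> K) k :
  uniq s -> \sum_(x <- s) F x * (x == k)%:R = if k \in s then F k else 0.
Proof.
elim: s => [|a s IH] /=; first by rewrite big_nil.
move=> /andP [an us]; rewrite big_cons IH // inE.
case: (eqVneq a k) => [<-|ak] /=; first by rewrite (negbTE an) mulr1 addr0.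
by rewrite mulr0 add0r; case: ifP => // ks; rewrite (negbTE ak).
Qed.

Section InitialForms.
Variables (R : realType) (Rays : finType) (r : nat) (omega : Jidx Rays r -> R).
Local Notation J := (Jidx Rays r).
Local Notation N := #|J|.
Local Notation P := (JPoly R Rays r).

Definition weight (f : J -> nat) : R := \sum_(j : J) omega j * (f j)%:R.

Lemma mweight_mnm_of f : Defs.mweight omega (mnm_of f) = weight f.
Proof. by apply: eq_bigr => j _; rewrite mnm_ofE. Qed.

Lemma init_form_coef (p : P) m : (init_form omega p)@_m =
  if (m \in msupp p) && all (fun m' => Defs.mweight omega m' <= Defs.mweight omega m) (msupp p)
  then p@_m else 0.
Proof.
rewrite /init_form raddf_sum /= big_mkcond /=.
rewrite (eq_bigr (fun m' => (if all (fun m'' => Defs.mweight omega m'' <=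
    Defs.mweight omega m') (msupp p) then p@_m' else 0) * (m' == m)%:R)); last first.
  by move=> m' _; case: ifP => _; rewrite ?mcoeffZ ?mcoeffX ?mcoeff0 ?mul0r.
by rewrite sum_seq_delta ?msupp_uniq //; case: (m \in msupp p).
Qed.

Lemma init_form_binomial (a b : 'X_{1..N}) : Defs.mweight omega b < Defs.mweight omega a ->
  init_form omega ('X_[a] - 'X_[b] : P) = 'X_[a].
Proof.
move=> lt; have ba : b != a by apply: contraTneq lt => ->; rewrite ltxx.
have supp k : k \in msupp ('X_[a] - 'X_[b] : P) -> k = a \/ k = b.
  rewrite mcoeff_msupp mcoeffB !mcoeffX.
  case: (eqVneq a k) => [->|_]; first by left.
  by case: (eqVneq b k) => [->|_]; [right|rewrite subrr eqxx].
have ain : a \in msupp ('X_[a] - 'X_[b] : P).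
  by rewrite mcoeff_msupp mcoeffB !mcoeffX eqxx (negbTE ba) subr0 oner_eq0.
apply/mpolyP => k; rewrite init_form_coef mcoeffX.
case: (eqVneq a k) => [<-|ak].
  rewrite ain /=; case: allP => [_|[]].
    by rewrite mcoeffB !mcoeffX eqxx (negbTE ba) subr0.
  by move=> m' /supp [->|->] //; apply: ltW.
case: ifP => // /andP [/supp [e|->] /allP Hall]; first by move: ak; rewrite e eqxx.
by have := Hall a ain; rewrite leNgt lt.
Qed.
End InitialForms.

Lemma row_mul_colE (K : pzRingType) m p q (A : 'M[K]_(m, p)) (B : 'M[K]_(p, q)) i j :
  (row i A *m col j B) 0 0 = (A *m B) i j.
Proof. by rewrite !mxE; apply: eq_bigr => l _; rewrite !mxE. Qed.

Section SmoothCones.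
Variables (n : nat) (Rays : finType) (v : Rays -> 'rV[int]_n).
Variables (sigma : {set Rays}) (M : 'M[int]_n).
Hypothesis v_inj : injective v.
Hypothesis M_unit : M \in unitmx.
Hypothesis M_rows : forall rho, rho \in sigma -> exists k, row k M = v rho.

Lemma smooth_cone_dual rho0 : rho0 \in sigma -> exists y : 'cV[int]_n,
  forall rho, rho \in sigma -> (v rho *m y) 0 0 = (rho == rho0)%:R.
Proof.
move=> r0s; have [k0 Hk0] := M_rows r0s.
exists (col k0 (invmx M)) => rho rs; have [k Hk] := M_rows rs.
have dual k' : (row k' M *m col k0 (invmx M)) 0 0 = (k' == k0)%:R.
  by rewrite row_mul_colE mulmxV // mxE.
case: (eqVneq rho rho0) => [->|ne]; first by rewrite -Hk0 dual eqxx.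
rewrite -Hk dual; case: (eqVneq k k0) => // ekk.
by case/eqP: ne; apply: v_inj; rewrite -Hk -Hk0 ekk.
Qed.

Lemma smooth_cone_coord (K : comNzRingType) (a : Rays -> K) rho0 : rho0 \in sigma ->
  (forall rho, rho \notin sigma -> a rho = 0) ->
  exists y : 'cV[int]_n,
    ((\sum_rho a rho *: map_mx intr (v rho)) *m map_mx intr y) 0 0 = a rho0.
Proof.
move=> r0s Ha; have [y Hy] := smooth_cone_dual r0s; exists y.
rewrite mulmx_suml summxE (bigD1 rho0) //= big1 ?addr0.
  by rewrite -scalemxAl mxE -map_mxM mxE Hy // eqxx mulr1.
move=> rho ne; rewrite -scalemxAl mxE -map_mxM mxE.
case: (boolP (rho \in sigma)) => rs; last by rewrite Ha ?mul0r.
by rewrite Hy // (negbTE ne) mulr0.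
Qed.

Lemma smooth_cone_free (l : Rays -> int) :
  (forall rho, rho \notin sigma -> l rho = 0) ->
  \sum_rho l rho *: v rho = 0 -> forall rho, l rho = 0.
Proof.
move=> lout vec rho0; case: (boolP (rho0 \in sigma)) => r0s; last exact: lout.
have [y <-] := smooth_cone_coord r0s lout.
have map_id a b (A : 'M[int]_(a, b)) : map_mx intr A = A.
  by apply/matrixP => i j; rewrite mxE intz.
by rewrite map_id (eq_bigr (fun rho => l rho *: v rho)) ?vec ?mul0mx ?mxE // => rho _; rewrite map_id.
Qed.
End SmoothCones.

Section FanCombinatorics.
Variables (Rays : finType) (Sigma : {set {set Rays}}).

Lemma maximal_cone_above sigma0 : sigma0 \in Sigma ->
  exists sigma, maximal_cone Sigma sigma /\ sigma0 \subset sigma.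
Proof.
move=> s0S; have H0 : (sigma0 \in Sigma) && (sigma0 \subset sigma0) by rewrite s0S subxx.
have [tau /andP [tS st] Hmax] := @arg_maxnP _ sigma0
   (fun tau => (tau \in Sigma) && (sigma0 \subset tau)) (fun tau => #|tau|) H0.
exists tau; split => //; split => // tau' t'S tt'.
have := Hmax tau'; rewrite t'S (subset_trans st tt') => /(_ isT) le.
by apply/esym/eqP; rewrite eqEcard tt'.
Qed.

Lemma primitive_collection_below P0 : P0 \notin Sigma ->
  exists P, primitive_collection Sigma P /\ P \subset P0.
Proof.
move=> P0S; have H0 : (P0 \subset P0) && (P0 \notin Sigma) by rewrite subxx P0S.
have [P /andP [PP0 PS] Hmin] := @arg_minnP _ P0
   (fun P => (P \subset P0) && (P \notin Sigma)) (fun P => #|P|) H0.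
exists P; split => //; split => // Q QP.
apply: contraT => QS; have := Hmin Q; rewrite (subset_trans (proper_sub QP) PP0) QS.
by move=> /(_ isT); rewrite leqNgt proper_card.
Qed.
End FanCombinatorics.

(* The labels of the maximal simplex of T_max attached to the cone sigma. *)
Definition cell_of (Rays : finType) (r : nat) (sigma : {set Rays}) : {set Jidx Rays r} :=
  [set j | match j with inl _ => true | inr rho => rho \in sigma end].
Arguments cell_of {Rays r} sigma.

Section Cells.
Variables (R : realType) (n : nat) (Rays : finType) (v : Rays -> 'rV[int]_n)
  (r : nat) (part : Rays -> 'I_r) (omega : Jidx Rays r -> R).
Local Notation J := (Jidx Rays r).


Definition face_value (c : Coord n r -> R) (j : J) : R :=
  \sum_(k : Coord n r) c k * (nu v part j k)%:~R.

Definition lower_face (c : Coord n r -> R) (S : {set J}) : Prop :=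
  forall j, face_value c j <= omega j /\ (j \in S <-> face_value c j = omega j).

(* The weight splits into the slack above the face and a function of the A-degree. *)
Lemma weight_split (c : Coord n r -> R) (f : J -> nat) :
  weight omega f = \sum_(j : J) (omega j - face_value c j) * (f j)%:R
                 + \sum_(k : Coord n r) c k * (Adeg v part f k)%:~R.
Proof.
have -> : \sum_(k : Coord n r) c k * (Adeg v part f k)%:~R
        = \sum_(j : J) face_value c j * (f j)%:R.
  rewrite (eq_bigr (fun k => \sum_(j : J) c k * ((f j)%:R * (nu v part j k)%:~R))); last first.
    by move=> k _; rewrite rmorph_sum mulr_sumr; apply: eq_bigr => j _; rewrite rmorphM.
  rewrite exchange_big /=; apply: eq_bigr => j _; rewrite /face_value mulr_suml.
  by apply: eq_bigr => k _; rewrite mulrA mulrAC.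
by rewrite -big_split /=; apply: eq_bigr => j _; rewrite -mulrDl subrK.
Qed.

Lemma lower_face_support (c : Coord n r -> R) (S : {set J}) (f g : J -> nat) :
  lower_face c S -> (forall j, (0 < g j)%N -> j \in S) ->
  (forall k, Adeg v part f k = Adeg v part g k) ->
  weight omega f <= weight omega g -> forall j, (0 < f j)%N -> j \in S.
Proof.
move=> Hc Hg Hdeg Hwt.
have slack_ge0 j : 0 <= (omega j - face_value c j) * (f j)%:R.
  by apply: mulr_ge0; [rewrite subr_ge0; case: (Hc j)|apply: ler0n].
have slack_g : \sum_(j : J) (omega j - face_value c j) * (g j)%:R = 0.
  apply: big1 => j _; case: (posnP (g j)) => [->|gp]; first by rewrite mulr0.
  by have [_ [/(_ (Hg _ gp)) ->]] := Hc j; rewrite subrr mul0r.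
have slack_f : \sum_(j : J) (omega j - face_value c j) * (f j)%:R = 0.
  apply/eqP; rewrite eq_le sumr_ge0 ?andbT; last by move=> j _; apply: slack_ge0.
  move: Hwt; rewrite (weight_split c f) (weight_split c g) slack_g add0r.
  rewrite (eq_bigr (fun k => c k * (Adeg v part g k)%:~R)) => [|k _]; last by rewrite Hdeg.
  by rewrite -[leRHS](add0r (\sum_k _)) lerD2r.
move=> j fp; have /psumr_eq0P /(_ j isT) := slack_f.
move/(_ (fun j _ => slack_ge0 j))/eqP.
rewrite mulf_eq0 pnatr_eq0 eqn0Ngt fp orbF subr_eq0 => /eqP e.
by case: (Hc j) => _ [_ ->].
Qed.

Lemma smooth_cell_free (sigma : {set Rays}) (M : 'M[int]_n) (l : J -> int) :
  injective v -> M \in unitmx -> (forall rho, rho \in sigma -> exists k, row k M = v rho) ->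
  (forall rho, rho \notin sigma -> l (inr rho) = 0) -> in_Lext v part l ->
  forall j, l j = 0.
Proof.
move=> v_inj M_unit M_rows lout Hl.
have vec : \sum_rho l (inr rho) *: v rho = 0.
  apply/rowP => k; rewrite summxE mxE -[RHS](Hl (inl k)) sumJ.
  rewrite [X in _ = X + _]big1 ?add0r; last by move=> i _; rewrite /nu mulr0.
  by apply: eq_bigr => rho _; rewrite mxE.
have linr := smooth_cone_free v_inj M_unit M_rows lout vec.
have linl i0 : l (inl i0) = 0.
  rewrite -[RHS](Hl (inr i0)) sumJ.
  rewrite [X in _ = _ + X]big1 ?addr0; last by move=> rho _; rewrite linr mul0r.
  rewrite (bigD1 i0) //= eqxx mulr1 big1 ?addr0 // => i ne.
  by rewrite (negbTE ne) mulr0.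
by case.
Qed.

Lemma smooth_cell_unique (c : Coord n r -> R) (S : {set J}) (sigma : {set Rays})
    (M : 'M[int]_n) (f g : J -> nat) :
  lower_face c S -> S \subset cell_of sigma ->
  injective v -> M \in unitmx -> (forall rho, rho \in sigma -> exists k, row k M = v rho) ->
  (forall j, (0 < g j)%N -> j \in S) ->
  (forall k, Adeg v part f k = Adeg v part g k) ->
  weight omega f <= weight omega g -> f =1 g.
Proof.
move=> Hc HS v_inj M_unit M_rows Hg Hdeg Hwt.
have Hf := lower_face_support Hc Hg Hdeg Hwt.
have out (h : J -> nat) rho : (forall j, (0 < h j)%N -> j \in S) ->
    rho \notin sigma -> h (inr rho) = 0%N.
  move=> Hh rs; apply/eqP; rewrite -leqn0 leqNgt; apply: contra rs.
  by move/Hh/(subsetP HS); rewrite inE.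
have := smooth_cell_free v_inj M_unit M_rows _ ((Adeg_eqE v part f g).1 Hdeg).
move=> /(_ _) H j; apply/eqP; rewrite -eqz_nat -subr_eq0; apply/eqP/H => rho rs.
by rewrite (out f) ?(out g).
Qed.
End Cells.

Section LeadInSR.
Variables (R : realType) (n : nat) (Rays : finType) (v : Rays -> 'rV[int]_n)
  (r : nat) (part : Rays -> 'I_r) (omega : Jidx Rays r -> R).
Variable Sigma : {set {set Rays}}.
Hypothesis Sigma_fan : smooth_complete_fan R v Sigma.
Hypothesis T_omega_max : forall S, regsub_cell v part omega S <-> Tmax_cell Sigma S.
Local Notation J := (Jidx Rays r).
Local Notation P := (JPoly R Rays r).

Lemma init_monomial_primitive (f : P) m : toric_ideal v part f ->
  m \in msupp (init_form omega f) ->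
  exists Pc, primitive_collection Sigma Pc /\ forall rho, rho \in Pc -> (0 < expo m (inr rho))%N.
Proof.
case: Sigma_fan => [[v_inj _] _ smooth _ _] Hf.
rewrite mcoeff_msupp init_form_coef; case: ifP => [/andP [mf Hmax] Hne|]; last by rewrite eqxx.
pose P0 := [set rho | (0 < expo m (inr rho))%N].
case: (boolP (P0 \in Sigma)) => P0S; last first.
  have [Pc [HP sub]] := primitive_collection_below P0S; exists Pc; split => // rho.
  by move/(subsetP sub); rewrite inE.
have [sigma [[sS smax] P0s]] := maximal_cone_above P0S.
pose S := [set j : J | (0 < expo m j)%N].
have Scell : S \subset cell_of sigma.
  apply/subsetP => -[i|rho]; rewrite !inE // => Hr.
  by apply: (subsetP P0s); rewrite inE.
have [c Hc] : regsub_cell v part omega S by apply/T_omega_max; exists sigma.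
have [M [M_unit M_rows]] := smooth _ sS.
pose d := Adeg v part (expo m).
have unique m' : m' \in msupp f -> Adeg_class v part d m' -> m' = m.
  move=> m'f /forallP Hm'; apply: expo_inj.
  apply: (smooth_cell_unique (c := c) Hc Scell v_inj M_unit M_rows).
  - by move=> j jp; rewrite inE.
  - by move=> k; apply/eqP; apply: Hm'.
  - exact: (allP Hmax).
have Hm : Adeg_class v part d m by apply/forallP.
move: (toric_coef_sum0 d Hf); rewrite (coef_sum_single mf Hm unique) => e.
by move: Hne; rewrite e eqxx.
Qed.

Lemma init_form_in_SR (f : P) : toric_ideal v part f -> SR_ideal Sigma (init_form omega f).
Proof.
move=> Hf; rewrite (mpolyE (init_form omega f)); apply: ideal_gen_sum => m Hm.
have [Pc [HP Hpos]] := init_monomial_primitive Hf Hm.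
have le : (mnm_of (ray_indicator Pc) <= m)%MM.
  apply/mnm_lepP => i; rewrite mnmE -{2}(enum_valK i).
  case: (enum_val i) => [//|rho] /=; case: (boolP (rho \in Pc)) => // rP.
  exact: Hpos.
rewrite -[m in 'X_[m]](submK le) mpolyXD scalerAl -prod_yvarE.
by apply: ideal_genMl; apply: ideal_gen_base; exists Pc.
Qed.

Lemma lead_sub_SR (p : P) : lead_ideal v part omega p -> SR_ideal Sigma p.
Proof. by apply: ideal_gen_trans => q [f [Hf ->]]; exact: init_form_in_SR. Qed.
End LeadInSR.

Section NefConvexity.
Variables (n : nat) (Rays : finType) (v : Rays -> 'rV[int]_n).

Lemma dualpair_sum (m : 'rV[int]_n) (A : pred Rays) (c : Rays -> int) :
  dualpair m (\sum_(rho | A rho) c rho *: v rho) = \sum_(rho | A rho) c rho * dualpair m (v rho).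
Proof.
rewrite /dualpair (eq_bigr (fun k => \sum_(rho | A rho) c rho * (m 0 k * v rho 0 k))).
  by rewrite exchange_big /=; apply: eq_bigr => rho _; rewrite mulr_sumr.
by move=> k _; rewrite summxE mulr_sumr; apply: eq_bigr => rho _; rewrite mxE mulrCA.
Qed.

(* Convexity of the support function of a nef divisor D = sum_rho a_rho D_rho:
   if sum_{rho in P} v_rho = sum b_rho v_rho with b >= 0 supported on a maximal
   cone, then sum b_rho a_rho <= sum_{rho in P} a_rho. *)
Lemma nef_convexity (Sigma : {set {set Rays}}) (a : Rays -> int) (sigma Pc : {set Rays})
    (b : Rays -> nat) :
  nef_divisor v Sigma a -> maximal_cone Sigma sigma ->
  (forall rho, rho \notin sigma -> b rho = 0%N) ->
  \sum_(rho in Pc) v rho = \sum_rho (b rho)%:Z *: v rho ->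
  \sum_rho (b rho)%:Z * a rho <= \sum_(rho in Pc) a rho.
Proof.
move=> Ha smax bout xE; have [m Hm] := Ha _ smax.
have E : \sum_(rho in Pc) 1 * dualpair m (v rho) = \sum_rho (b rho)%:Z * dualpair m (v rho).
  by rewrite -!dualpair_sum -xE; congr dualpair; apply: eq_bigr => rho _; rewrite scale1r.
suff : - \sum_(rho in Pc) a rho <= - \sum_rho (b rho)%:Z * a rho by rewrite lerN2.
have -> : - \sum_rho (b rho)%:Z * a rho = \sum_rho (b rho)%:Z * dualpair m (v rho).
  rewrite -sumrN; apply: eq_bigr => rho _; rewrite -mulrN.
  case: (boolP (rho \in sigma)) => rs; last by rewrite bout ?mul0r.
  by have [/(_ rs) -> _] := Hm rho.
rewrite -E -sumrN; apply: ler_sum => rho _; rewrite mul1r.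
by case: (boolP (rho \in sigma)) => rs; have [H1 H2] := Hm rho; [rewrite H1 | apply: H2].
Qed.
End NefConvexity.

Lemma cone_decomposition (R : realType) (n : nat) (Rays : finType) (v : Rays -> 'rV[int]_n)
    (Sigma : {set {set Rays}}) (x : 'rV[int]_n) :
  smooth_complete_fan R v Sigma -> exists sigma (b : Rays -> nat),
  [/\ maximal_cone Sigma sigma, forall rho, rho \notin sigma -> b rho = 0%N
    & x = \sum_rho (b rho)%:Z *: v rho].
Proof.
case=> [[v_inj _] _ smooth _ complete].
have [sigma0 s0S [a [a_ge0 aout0 xE]]] := complete (map_mx intr x).
have [sigma [smax s0s]] := maximal_cone_above s0S; have [sS _] := smax.
have aout rho : rho \notin sigma -> a rho = 0.
  by move=> rs; apply: aout0; apply: contra rs; exact: (subsetP s0s).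
have [M [M_unit M_rows]] := smooth _ sS.
have a_int rho : exists z : int, a rho = z%:~R.
  case: (boolP (rho \in sigma)) => rs; last by exists 0; rewrite aout.
  have [y <-] := smooth_cone_coord v_inj M_unit M_rows rs aout.
  by exists ((x *m y) 0 0); rewrite -xE -map_mxM mxE.
pose b rho : nat := `|Num.floor (a rho)|%N.
have bE rho : (b rho)%:R = a rho.
  have [z az] := a_int rho; have z0 : 0 <= z by rewrite -(ler0z R) -az.
  by rewrite /b az intrKfloor -[X in _ = X%:~R](gez0_abs z0).
exists sigma, b; split => // [rho rs|].
  by apply/eqP; rewrite -(pnatr_eq0 R) bE aout.
apply/rowP => k; apply: (@intr_inj R); have := congr1 (fun A : 'rV[R]_n => A 0 k) xE.
rewrite mxE => ->; rewrite !summxE rmorph_sum; apply: eq_bigr => rho _.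
by rewrite !mxE -bE rmorphM.
Qed.

Section Padding.
Variables (n : nat) (Rays : finType) (v : Rays -> 'rV[int]_n) (r : nat) (part : Rays -> 'I_r).
Local Notation J := (Jidx Rays r).

Definition part_count (e : Rays -> nat) (i : 'I_r) : nat := (\sum_rho e rho * (part rho == i))%N.

Definition padded (Pc : {set Rays}) (b : Rays -> nat) (j : J) : nat :=
  match j with
  | inl i => (part_count (fun rho => rho \in Pc) i - part_count b i)%N
  | inr rho => b rho
  end.

Lemma padded_Adeg (Pc : {set Rays}) (b : Rays -> nat) :
  \sum_(rho in Pc) v rho = \sum_rho (b rho)%:Z *: v rho ->
  (forall i, part_count b i <= part_count (fun rho => rho \in Pc) i)%N ->
  forall c, Adeg v part (ray_indicator Pc) c = Adeg v part (padded Pc b) c.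
Proof.
move=> xE bound [k|i]; rewrite /Adeg !sumJ.
  rewrite [X in X + _ = _]big1 ?add0r => [|i _]; last by rewrite mulr0.
  rewrite [X in _ = X + _]big1 ?add0r => [|i _]; last by rewrite mulr0.
  have := congr1 (fun x : 'rV[int]_n => x 0 k) xE; rewrite !summxE big_mkcond /= => xk.
  transitivity (\sum_rho (if rho \in Pc then v rho 0 k else 0)).
    by apply: eq_bigr => rho _; rewrite /nu /=; case: (rho \in Pc); rewrite ?mul1r ?mul0r.
  by rewrite xk; apply: eq_bigr => rho _; rewrite mxE.
rewrite [X in X + _ = _]big1 ?add0r => [|i' _]; last by rewrite mul0r.
rewrite (bigD1 i) //= [X in _ = _ + X + _]big1 ?addr0 => [|i' ne]; last first.
  by rewrite /nu (negbTE ne) mulr0.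
have cnt e : \sum_rho ((e rho)%:Z * ((part rho == i) : nat)%:Z) = (part_count e i)%:Z.
  by rewrite /part_count PoszSum; apply: eq_bigr => rho _; rewrite PoszM.
by rewrite /nu /= eqxx mulr1 (cnt b) (cnt (fun rho => rho \in Pc)) -PoszD subnK ?bound.
Qed.
End Padding.

Section SRInLead.
Variables (R : realType) (n : nat) (Rays : finType) (v : Rays -> 'rV[int]_n)
  (r : nat) (part : Rays -> 'I_r) (omega : Jidx Rays r -> R).
Variable Sigma : {set {set Rays}}.
Hypothesis Sigma_fan : smooth_complete_fan R v Sigma.
Hypothesis Sigma_nef : nef_partition v part Sigma.
Hypothesis T_omega_max : forall S, regsub_cell v part omega S <-> Tmax_cell Sigma S.
Local Notation J := (Jidx Rays r).
Local Notation P := (JPoly R Rays r).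

Lemma primitive_lead (Pc : {set Rays}) : primitive_collection Sigma Pc ->
  lead_ideal v part omega ('X_[mnm_of (ray_indicator Pc)] : P).
Proof.
move=> [PcS _]; have [_ faces _ _ _] := Sigma_fan.
have [sigma [b [smax bout xE]]] := cone_decomposition (\sum_(rho in Pc) v rho) Sigma_fan.
have bound i : (part_count part b i <= part_count part (fun rho => rho \in Pc) i)%N.
  rewrite -lez_nat /part_count !PoszSum.
  have -> : \sum_rho ((rho \in Pc) * (part rho == i))%N%:Z =
            \sum_(rho in Pc) ((part rho == i) : nat)%:Z.
    by rewrite [RHS]big_mkcond; apply: eq_bigr => rho _; case: (rho \in Pc); rewrite ?mul1n.
  under eq_bigr do rewrite PoszM.
  exact: nef_convexity (Sigma_nef i) smax bout xE.
pose u : J -> nat := ray_indicator Pc; pose w := padded part Pc b.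
have Hdeg := padded_Adeg xE bound.
have [rho1 r1P r1s] : exists2 rho1, rho1 \in Pc & rho1 \notin sigma.
  apply/exists_inP; apply: contraNT PcS; rewrite negb_exists_in => /forall_inP H.
  by apply: (faces _ _ smax.1); apply/subsetP => rho /H; rewrite negbK.
have [c Hc] : regsub_cell v part omega (cell_of sigma) by apply/T_omega_max; exists sigma.
have w_cell j : (0 < w j)%N -> j \in cell_of sigma.
  case: j => [i|rho] /= bp; rewrite inE //.
  by apply: contraT => rs; rewrite bout in bp.
have lt_wu : weight omega w < weight omega u.
  rewrite ltNge; apply/negP => le_uw.
  have := lower_face_support Hc w_cell Hdeg le_uw (j := inr rho1).
  by rewrite /u /= r1P inE => /(_ isT); apply/negP.
apply: ideal_gen_base; exists ('X_[mnm_of u] - 'X_[mnm_of w]); split.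
  exact: toric_binomial.
by rewrite init_form_binomial // !mweight_mnm_of.
Qed.

Lemma SR_sub_lead (p : P) : SR_ideal Sigma p -> lead_ideal v part omega p.
Proof.
apply: ideal_gen_trans => q [Pc [HP ->]]; rewrite prod_yvarE; exact: primitive_lead.
Qed.
End SRInLead.

Theorem mainTheorem6
  (R : realType) (n : nat) (Rays : finType) (v : Rays -> 'rV[int]_n)
  (Sigma : {set {set Rays}}) (r : nat) (part : Rays -> 'I_r)
  (omega : Jidx Rays r -> R) :
  smooth_projective_fan R v Sigma ->
  nef_partition v part Sigma ->
  (forall S : {set Jidx Rays r},
      regsub_cell v part omega S <-> Tmax_cell Sigma S) ->
  forall p : JPoly R Rays r,
    lead_ideal v part omega p <-> SR_ideal Sigma p.
Proof.
move=> [Sigma_fan _] Sigma_nef T_omega_max p; split.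
  exact: lead_sub_SR Sigma_fan T_omega_max p.
exact: SR_sub_lead Sigma_fan Sigma_nef T_omega_max p.
Qed.
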